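(* For $n \ge 2$, the path $P_n$ is $\gamma_{\rm tg}$-critical if and only if $n \pmod 6 \in \{2,4\}$.
   Context: Total domination game on a graph $G$ (without isolated vertices): Dominator and Staller alternately choose vertices; each chosen vertex must be adjacent to at least one vertex not yet totally dominated (i.e., not adjacent to any previously chosen vertex); the game ends when no legal move exists. Dominator minimizes, Staller maximizes the number of moves. $\gamma_{\rm tg}(G)$ is the number of moves when Dominator starts and both play optimally. $G|v$ is the graph with vertex $v$ declared already totally dominated (so moves must totally dominate some vertex not yet totally dominated and other than the declared one), and $\gamma_{\rm tg}(G|v)$ is the optimal number of moves of the Dominator-start game on it. $G$ is $\gamma_{\rm tg}$-critical if $\gamma_{\rm tg}(G|v) < \gamma_{\rm tg}(G)$ for every vertex $v$. *)

From mathcomp Require Import all_boot.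
Set Implicit Arguments. Unset Strict Implicit. Unset Printing Implicit Defensive.

(* A finite simple graph: vertex type T (finType), adjacency relation e
   (intended symmetric and irreflexive). *)

Section TotalDominationGame.
Variables (T : finType) (e : rel T).

Definition nbhd (v : T) : {set T} := [set u | e v u].

(* D = set of vertices already totally dominated (or declared so).
   v is a legal move iff v is adjacent to a vertex not in D. *)
Definition legal (D : {set T}) (v : T) : bool := [exists u, e v u && (u \notin D)].

(* Optimal number of remaining moves with fuel; dom = true iff Dominator
   is to move. Each legal move strictly enlarges D, so fuel #|T|.+1 is
   enough for the game to end. *)
Fixpoint tg_value (fuel : nat) (D : {set T}) (dom : bool) : nat :=
  match fuel with
  | 0 => 0
  | fuel'.+1 =>
      let vs := [seq (tg_value fuel' (D :|: nbhd v) (~~ dom)).+1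
                | v <- enum T & legal D v] in
      if dom then foldr minn (head 0 vs) vs else foldr maxn 0 vs
  end.

Definition gamma_tg : nat := tg_value #|T|.+1 set0 true.

(* gamma_tg(G|v): v declared already totally dominated *)
Definition gamma_tg_decl (v : T) : nat := tg_value #|T|.+1 [set v] true.

Definition gamma_tg_critical : Prop := forall v : T, gamma_tg_decl v < gamma_tg.

End TotalDominationGame.

Definition path_rel (n : nat) : rel 'I_n :=
  fun i j => (i.+1 == j :> nat) || (j.+1 == i :> nat).
Arguments path_rel n : clear implicits.

(* Vertex i of P_n is totally dominated only by its neighbours i-1 and i+1, so
   the game splits into two independent games, one on the vertices of each
   parity.  In each of them a move dominates two consecutive targets, or a
   single target at an end of the path.  Give a maximal run of L undominated
   targets the weight (4L+2)/3 if some move dominates exactly one of its end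
   targets, and 2((2L+1)/3) otherwise (0 if L = 1).  Every move lowers the
   total weight W by 1, 2 or 3; Dominator can always lower it by 3 when W is odd
   and by at least 2 when W is even, Staller by 1 when W is odd and by at most 2
   when W is even.  Hence the game lasts W/2 moves when Dominator starts and
   ceil(W/2) when Staller starts, and comparing W for the empty position with W
   after one vertex is declared dominated gives the residues of n modulo 6. *)

From mathcomp Require Import all_boot zify.
Set Implicit Arguments. Unset Strict Implicit. Unset Printing Implicit Defensive.

Definition dominator_drop (w w' : nat) : bool := w' + 2 + odd w <= w.
Definition staller_drop (w w' : nat) : bool := (w' < w) && (w + odd w <= w' + 2).

Lemma odd_summand a b :
  0 < a + b -> (0 < a /\ odd (a + b) <= odd a) \/ (0 < b /\ odd (a + b) <= odd b).
Proof.
move=> ab_gt0; rewrite oddD; case: (posnP a) => [a0|a_gt0].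
  by right; rewrite a0 in ab_gt0 *.
case: (boolP (odd b)) => ob; last by left; rewrite addbF.
case: (odd a); first by left.
by right; split => //; move: ob; case: (b).
Qed.

Lemma dominator_dropDr a a' b :
  odd (a + b) <= odd a -> dominator_drop a a' -> dominator_drop (a + b) (a' + b).
Proof. by rewrite /dominator_drop; lia. Qed.

Lemma staller_dropDr a a' b :
  odd (a + b) <= odd a -> staller_drop a a' -> staller_drop (a + b) (a' + b).
Proof. by rewrite /staller_drop => par /andP[lt le]; apply/andP; split; lia. Qed.

Lemma foldr_minn_head (s : seq nat) t :
  all (leq t) s -> t \in s -> foldr minn (head 0 s) s = t.
Proof.
move=> s_ge t_in; apply/eqP; rewrite eqn_leq; apply/andP; split.
  elim: s t_in {s_ge} (head 0 s) => //= x s IH; rewrite inE => /orP[/eqP -> y|/IH le y].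
    exact: geq_minl.
  exact: leq_trans (geq_minr _ _) (le _).
have : t <= head 0 s by case: s s_ge t_in => //= x s /andP[].
elim: s s_ge {t_in} (head 0 s) => //= x s IH /andP[tx /IH s_ge] y ty.
by rewrite leq_min tx s_ge.
Qed.

Lemma foldr_maxn0 (s : seq nat) t :
  all (geq t) s -> t \in s -> foldr maxn 0 s = t.
Proof.
move=> s_le t_in; apply/eqP; rewrite eqn_leq; apply/andP; split.
  by elim: s s_le {t_in} => //= x s IH /andP[xt /IH]; rewrite geq_max xt.
elim: s t_in {s_le} => //= x s IH; rewrite inE => /orP[/eqP ->|/IH].
  exact: leq_maxl.
by move/leq_trans; apply; apply: leq_maxr.
Qed.

Section PotentialGame.
Variables (T : finType) (e : rel T) (W : {set T} -> nat).

Lemma legalE (D : {set T}) v : legal e D v = (D :|: nbhd e v != D).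
Proof.
apply/idP/idP => [/existsP[u /andP[vu uD]]|].
  by apply: contraNneq uD => <-; rewrite in_setU inE vu orbT.
apply: contraNT; rewrite negb_exists => /forallP none; apply/eqP/setP => u.
by rewrite in_setU inE; have := none u; case: (e v u); rewrite ?orbF // negbK => ->.
Qed.

Lemma card_undominated_legal (D : {set T}) v :
  legal e D v -> #|~: (D :|: nbhd e v)| < #|~: D|.
Proof.
move=> /existsP[u /andP[evu uD]]; apply: proper_card; apply/properP; split.
  by apply/subsetP => x; rewrite !inE negb_or => /andP[].
by exists u; rewrite !inE ?evu ?uD //= orbT.
Qed.

Hypothesis W_legal : forall D v,
  legal e D v -> W (D :|: nbhd e v) < W D <= W (D :|: nbhd e v) + 3.
Hypothesis W_dominator : forall D,
  0 < W D -> exists2 v, legal e D v & dominator_drop (W D) (W (D :|: nbhd e v)).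
Hypothesis W_staller : forall D,
  0 < W D -> exists2 v, legal e D v & staller_drop (W D) (W (D :|: nbhd e v)).

Lemma tg_value_potential fuel D dom : #|~: D| < fuel ->
  tg_value e fuel D dom = if dom then (W D)./2 else uphalf (W D).
Proof.
elim: fuel D dom => [|fuel IH] D dom //= D_lt.
pose f b v := (if b then (W (D :|: nbhd e v))./2 else uphalf (W (D :|: nbhd e v))).+1.
have -> : [seq (tg_value e fuel (D :|: nbhd e v) (~~ dom)).+1
          | v <- enum T & legal e D v] = [seq f (~~ dom) v | v <- enum T & legal e D v].
  apply/eq_in_map => v; rewrite mem_filter => /andP[Dv _].
  by rewrite IH //; apply: leq_trans (card_undominated_legal Dv) _.
have f_in b v : legal e D v -> f b v \in [seq f b v | v <- enum T & legal e D v].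
  by move=> Dv; apply: map_f; rewrite mem_filter Dv mem_enum.
have [W0|W_gt0] := posnP (W D).
  suff -> : [seq v <- enum T | legal e D v] = [::] by rewrite W0; case: dom.
  apply/eqP; rewrite -[_ == _]negbK -has_filter; apply/hasP => -[v _ Dv].
  by have := W_legal Dv; rewrite W0.
case: dom => /=.
  apply: foldr_minn_head.
    apply/allP => x /mapP[v]; rewrite mem_filter => /andP[/W_legal ? _] ->.
    rewrite /f /=; lia.
  have [v Dv] := W_dominator W_gt0; rewrite /dominator_drop => drop.
  have bounds := W_legal Dv.
  suff <- : f false v = (W D)./2 by apply: f_in.
  rewrite /f /=; lia.
apply: foldr_maxn0.
  apply/allP => x /mapP[v]; rewrite mem_filter => /andP[/W_legal ? _] ->.
  rewrite /f /=; lia.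
have [v Dv /andP[lt le]] := W_staller W_gt0.
suff <- : f true v = uphalf (W D) by apply: f_in.
rewrite /f /=; lia.
Qed.

Lemma gamma_tg_potential : gamma_tg e = (W set0)./2.
Proof. by rewrite /gamma_tg tg_value_potential // setC0 cardsT. Qed.

Lemma gamma_tg_decl_potential v : gamma_tg_decl e v = (W [set v])./2.
Proof. by rewrite /gamma_tg_decl tg_value_potential // ltnS max_card. Qed.

End PotentialGame.

Definition run_weight (c r : bool) (L : nat) : nat :=
  if c || r then (4 * L + 2) %/ 3 else if L == 1 then 0 else 2 * ((2 * L + 1) %/ 3).

(* [bs] lists the targets of one parity class, [true] for the dominated ones;
   [L] counts the undominated targets read just before [bs], [c] tells whether
   their run can be hit at its left end alone, and [r] whether the last target
   of the class is dominated alone by some move. *)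
Fixpoint seg_weight (c : bool) (L : nat) (r : bool) (bs : seq bool) : nat :=
  match bs with
  | [::] => run_weight c r L
  | b :: bs' => if b then run_weight c true L + seg_weight true 0 r bs'
                else seg_weight c L.+1 r bs'
  end.

(* Move [k] dominates targets [k-1] and [k]; [k = 0] and [k = size bs] are the
   end moves. *)
Fixpoint cover (k : nat) (bs : seq bool) : seq bool :=
  match bs, k with
  | [::], _ => [::]
  | _ :: bs', 0 => true :: bs'
  | _ :: bs', 1 => true :: cover 0 bs'
  | b :: bs', k'.+2 => b :: cover k'.+1 bs'
  end.

Definition seg_move (c r : bool) (bs : seq bool) (k : nat) : bool :=
  [&& k <= size bs, (k == 0) ==> c & (k == size bs) ==> r].

Ltac run_arith := rewrite /run_weight ?orbT /=;
  repeat match goal with |- context [if ?b then _ else _] => case: (boolP b) => /= ? end;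
  lia.

Lemma run_weight0 c r : run_weight c r 0 = 0.
Proof. by case: c; case: r. Qed.

Lemma size_cover k bs : size (cover k bs) = size bs.
Proof. by elim: bs k => [|b bs IH] [|[|k]] //=; rewrite IH. Qed.

Lemma nth_cover k bs i : nth true (cover k bs) i = [|| nth true bs i, i == k | i.+1 == k].
Proof.
elim: bs k i => [|b bs IH] k i; first by rewrite /= !nth_nil.
case: k => [|[|k]]; case: i => [|i] //=; rewrite ?orbT ?orbF //.
- by rewrite IH /= orbF.
- by rewrite IH.
Qed.

Lemma cover_nseq_true p k bs :
  cover (p + k.+1) (nseq p false ++ true :: bs) = nseq p false ++ true :: cover k bs.
Proof. by elim: p => [|p IH] /=; [case: k | rewrite addnS /= -addnS IH]. Qed.

Lemma cover_nseq_end p bs :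
  cover p.+1 (nseq p.+1 false ++ bs) = nseq p false ++ true :: cover 0 bs.
Proof. by elim: p => [|p IH] //=; rewrite -IH. Qed.

Lemma seg_weight_nseq c L r p bs :
  seg_weight c L r (nseq p false ++ bs) = seg_weight c (L + p) r bs.
Proof. by elim: p L => [|p IH] L /=; rewrite ?addn0 // IH addSnnS. Qed.

Lemma seg_weight_nseq0 c L r p : seg_weight c L r (nseq p false) = run_weight c r (L + p).
Proof. by rewrite -[nseq _ _]cats0 seg_weight_nseq. Qed.

Lemma split_first_run bs : exists p rest, bs = nseq p false ++ rest /\ head true rest.
Proof.
elim: bs => [|[] bs [p [rest [-> hr]]]]; first by exists 0, [::].
  by exists 0, (true :: nseq p false ++ rest).
by exists p.+1, rest.
Qed.

Lemma seg_weight_run c L r p rest : head true rest ->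
  seg_weight c L r (nseq p false ++ rest) =
  run_weight c ((rest != [::]) || r) (L + p) + seg_weight true 0 r rest.
Proof.
rewrite seg_weight_nseq; case: rest => [|[] rest] //= _.
by rewrite run_weight0 addn0.
Qed.

Lemma seg_weight_cover (c r : bool) L k bs :
  (k == 0 -> c && (L == 0)) -> k <= size bs -> (k == size bs -> r) -> cover k bs != bs ->
  seg_weight c L r (cover k bs) < seg_weight c L r bs <= seg_weight c L r (cover k bs) + 3.
Proof.
elim: bs c L k => [|b bs IH] c L k //.
case: k => [|[|k]] k0 k_le k_end moved.
- have [p [rest [Ebs hr]]] := split_first_run bs; subst bs; clear IH.
  have /andP[c_true /eqP L0] := k0 isT; subst L; clear k_le k_end.
  case: b moved => /=; rewrite ?eqxx // => _; rewrite !seg_weight_run // c_true; run_arith.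
- have [p [rest [Ebs hr]]] := split_first_run bs; subst bs; clear IH.
  case: p k_le k_end moved => [|p] /= k_le k_end moved.
    case: rest hr k_le k_end moved => [|[] rest] //= _ k_le k_end;
      case: b => /=; rewrite ?eqxx // => _.
      by rewrite (k_end isT); run_arith.
    by rewrite run_weight0; run_arith.
  clear k_le k_end; case: b moved => /=; rewrite ?eqxx // => _;
    by rewrite !seg_weight_run // ?run_weight0; run_arith.
- have moved' : cover k.+1 bs != bs by apply: contra moved => /eqP /= ->.
  clear k0; case: b moved k_le k_end => /= _ k_le k_end.
    by have := IH true 0 k.+1 (fun _ => isT) k_le k_end moved'; lia.
  exact: IH c L.+1 k.+1 (fun h => False_ind _ (notF h)) k_le k_end moved'.
Qed.

(* The weights a run of [p] undominated targets can be left with by one move: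
   covering its first two targets, its second and third, or one end alone. *)
Definition run_option (c X : bool) (p w : nat) : bool :=
  [|| (1 < p) && (w == run_weight true X (p - 2)),
      (2 < p) && (w == run_weight c true 1 + run_weight true X (p - 3)),
      [&& c, 0 < p & w == run_weight true X p.-1]
    | [&& X, 0 < p & w == run_weight c true p.-1]].

Lemma run_option_end c X p :
  c || X -> 0 < p -> run_option c X p (run_weight true true p.-1).
Proof. by case: c; case: X => // _ p_gt0; rewrite /run_option p_gt0 eqxx !orbT. Qed.

Lemma dominator_drop_run c X p : 0 < run_weight c X p ->
  exists2 w, run_option c X p w & dominator_drop (run_weight c X p) w.
Proof.
rewrite /dominator_drop; case: p => [|[|p]] w_gt0; first by rewrite run_weight0 in w_gt0.
  have cX : c || X by move: w_gt0; rewrite /run_weight; case: (c || X).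
  by exists (run_weight true true 0); [apply: run_option_end | move: cX; run_arith].
exists (run_weight true X p); last by run_arith.
by rewrite /run_option !subSS subn0 eqxx.
Qed.

Lemma staller_drop_run c X p : 0 < run_weight c X p ->
  exists2 w, run_option c X p w & staller_drop (run_weight c X p) w.
Proof.
rewrite /staller_drop => w_gt0.
case: (boolP ((c || X) && (p %% 3 == 2))) => [/andP[cX p2] | not_end].
  have p_gt0 : 0 < p by case: p p2 {w_gt0}.
  exists (run_weight true true p.-1); first exact: run_option_end.
  by move: cX p2; run_arith.
case: p w_gt0 not_end => [|[|[|p]]] w_gt0 not_end; first by rewrite run_weight0 in w_gt0.
- have cX : c || X by move: w_gt0; rewrite /run_weight; case: (c || X).
  by exists (run_weight true true 0); [apply: run_option_end | move: cX; run_arith].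
- by exists 0; [rewrite /run_option eqxx | move: not_end w_gt0; run_arith].
exists (run_weight c true 1 + run_weight true X p); last by move: not_end; run_arith.
by rewrite /run_option !subSS !subn0 eqxx orbT.
Qed.

Lemma seg_weight_true r bs : seg_weight true 0 r (true :: bs) = seg_weight true 0 r bs.
Proof. by rewrite /= run_weight0. Qed.

Lemma run_option_move c r p rest w : head true rest ->
  run_option c ((rest != [::]) || r) p w ->
  exists2 k, seg_move c r (nseq p false ++ rest) k &
    seg_weight c 0 r (cover k (nseq p false ++ rest)) = w + seg_weight true 0 r rest.
Proof.
rewrite /run_option => hr /or4P[/andP[p_gt1 /eqP->] | /andP[p_gt2 /eqP->]
                                | /and3P[c_true p_gt0 /eqP->] | /and3P[X_true p_gt0 /eqP->]].
- case: p p_gt1 => [|[|q]] // _; exists 1.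
    by rewrite /seg_move size_cat size_nseq !addSn.
  by rewrite /= !run_weight0 seg_weight_run // !subSS subn0.
- case: p p_gt2 => [|[|[|q]]] // _; exists 2.
    by rewrite /seg_move size_cat size_nseq !addSn.
  by rewrite /= !run_weight0 add0n seg_weight_run // !subSS subn0 addnA.
- case: p p_gt0 => [|q] // _; exists 0; first by rewrite /seg_move c_true.
  by rewrite /= run_weight0 seg_weight_run.
- case: p p_gt0 => [|q] // _; exists q.+1.
    rewrite /seg_move size_cat size_nseq leq_addr /=.
    case: rest hr X_true => [|x rest] _ /=; first by rewrite addn0 eqxx.
    by rewrite -{1}[q.+1]addn0 eqn_add2l.
  rewrite cover_nseq_end.
  have -> : cover 0 rest = rest by case: rest hr X_true => [|[] rest].
  by rewrite seg_weight_run // seg_weight_true.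
Qed.

Lemma seg_move_lift c r p rest k : seg_move true r rest k ->
  seg_move c r (nseq p false ++ true :: rest) (p + k.+1) /\
  seg_weight c 0 r (cover (p + k.+1) (nseq p false ++ true :: rest)) =
    run_weight c true p + seg_weight true 0 r (cover k rest).
Proof.
move=> /and3P[k_le _ k_end]; rewrite cover_nseq_true seg_weight_run //; split => //.
by rewrite /seg_move size_cat size_nseq /= leq_add2l ltnS k_le eqn_add2l eqSS k_end addnS.
Qed.

Section SegmentDrop.
Variable drop : nat -> nat -> bool.
Hypothesis dropDr : forall a a' b, odd (a + b) <= odd a -> drop a a' -> drop (a + b) (a' + b).
Hypothesis drop_run : forall c X p,
  0 < run_weight c X p -> exists2 w, run_option c X p w & drop (run_weight c X p) w.

Lemma seg_drop c r bs : 0 < seg_weight c 0 r bs ->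
  exists2 k, seg_move c r bs k & drop (seg_weight c 0 r bs) (seg_weight c 0 r (cover k bs)).
Proof.
elim: {bs}(size bs).+1 {-2}bs (ltnSn (size bs)) c => // m IH bs bs_lt c.
have [p [rest [Ebs hr]]] := split_first_run bs; subst bs.
rewrite seg_weight_run // add0n => /odd_summand[[w_gt0 par] | [R_gt0 par]].
  have [w opt dw] := drop_run w_gt0.
  have [k mk Ek] := run_option_move hr opt.
  by exists k; rewrite // Ek; apply: dropDr.
case: rest hr R_gt0 par bs_lt => [|[] rest] //= _; rewrite run_weight0 add0n.
move=> R_gt0 par bs_lt.
have size_lt : size rest < m by move: bs_lt; rewrite size_cat /= size_nseq; lia.
have [k mk dk] := IH rest size_lt true R_gt0.
have [mk' Ek] := seg_move_lift c p mk.
exists (p + k.+1); rewrite // Ek.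
by rewrite addnC [_ + seg_weight _ _ _ _]addnC; apply: dropDr; rewrite // addnC.
Qed.

End SegmentDrop.

Lemma mkseq_eq1 a m : a < m ->
  mkseq (fun i => i == a) m = nseq a false ++ true :: nseq (m - a.+1) false.
Proof.
move=> a_lt; apply: (@eq_from_nth _ false).
  by rewrite size_mkseq size_cat size_nseq /= size_nseq; lia.
move=> i; rewrite size_mkseq => i_lt; rewrite nth_mkseq // nth_cat size_nseq.
case: ltnP => [ia|ai]; first by rewrite nth_nseq ia; apply/eqP; lia.
case E: (i - a) => [|j] /=; first by apply/eqP; lia.
by rewrite nth_nseq; case: ifP => _; apply/eqP; lia.
Qed.

Section PathClasses.
Variable n : nat.
Notation e := (path_rel n).

(* Class [c] consists of the vertices [c + 2i]; vertex [v] dominates targets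
   [move_index v - 1] and [move_index v] of class [move_class v].  Only class
   [true] has a left end move (vertex 0 dominates vertex 1 alone). *)
Definition in_val (D : {set 'I_n}) (x : nat) : bool := [exists y in D, val y == x].
Definition class_size (c : bool) : nat := if c then n./2 else uphalf n.
Definition class_seq (c : bool) (D : {set 'I_n}) : seq bool :=
  mkseq (fun i => in_val D (c + i.*2)) (class_size c).
Definition class_end (c : bool) : bool := if c then odd n else ~~ odd n.
Definition class_weight (c : bool) (D : {set 'I_n}) : nat :=
  seg_weight c 0 (class_end c) (class_seq c D).
Definition path_weight (D : {set 'I_n}) : nat := class_weight false D + class_weight true D.
Definition move_class (v : 'I_n) : bool := ~~ odd v.
Definition move_index (v : 'I_n) : nat := if odd v then (v./2).+1 else v./2.

Lemma path_weightE c D : path_weight D = class_weight c D + class_weight (~~ c) D.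
Proof. by case: c; rewrite /path_weight // addnC. Qed.

Lemma in_val_ord D (y : 'I_n) : in_val D y = (y \in D).
Proof.
apply/existsP/idP => [[z /andP[Dz /eqP /val_inj <-]] // | Dy].
by exists y; rewrite Dy eqxx.
Qed.

Lemma in_val_nbhd D v x : in_val (D :|: nbhd e v) x =
  in_val D x || (x < n) && ((v.+1 == x) || (x.+1 == v)).
Proof.
apply/existsP/orP => [[y /andP[]]|[/existsP[y /andP[Dy yx]] | /andP[x_lt vx]]].
- rewrite in_setU inE => /orP[Dy yx|vy /eqP <-]; first by left; apply/existsP; exists y; rewrite Dy.
  by right; rewrite ltn_ord.
- by exists y; rewrite in_setU Dy.
- by exists (Ordinal x_lt); rewrite in_setU inE /path_rel /= vx orbT eqxx.
Qed.

Lemma size_class_seq c D : size (class_seq c D) = class_size c.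
Proof. exact: size_mkseq. Qed.

Lemma class_size_bound c i : i < class_size c -> c + i.*2 < n.
Proof. by rewrite /class_size; case: c => /=; lia. Qed.

Lemma class_seq_move D v :
  class_seq (move_class v) (D :|: nbhd e v) = cover (move_index v) (class_seq (move_class v) D).
Proof.
have v_half := odd_double_half v.
apply: (@eq_from_nth _ true); rewrite ?size_cover ?size_class_seq // => i i_lt.
rewrite nth_cover !nth_mkseq // in_val_nbhd (class_size_bound i_lt) /=; congr (_ || _).
by rewrite /move_class /move_index; case: (odd v) v_half => /= v_half; lia.
Qed.

Lemma class_seq_move_other D v :
  class_seq (~~ move_class v) (D :|: nbhd e v) = class_seq (~~ move_class v) D.
Proof.
have v_half := odd_double_half v.
apply: (@eq_from_nth _ true); rewrite ?size_class_seq // => i i_lt.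
rewrite !nth_mkseq // in_val_nbhd (class_size_bound i_lt) /= orbC.
suff -> : (v.+1 == ~~ move_class v + i.*2) || ((~~ move_class v + i.*2).+1 == v) = false by [].
by rewrite /move_class; case: (odd v) v_half => /= v_half; lia.
Qed.

Lemma class_seq_inj D D' :
  class_seq false D = class_seq false D' -> class_seq true D = class_seq true D' -> D = D'.
Proof.
move=> E0 E1; apply/setP => y.
have y_half := odd_double_half y.
have y_lt : y./2 < class_size (odd y).
  by rewrite /class_size; case: (odd y) y_half => /= y_half; have := ltn_ord y; lia.
have : nth true (class_seq (odd y) D) y./2 = nth true (class_seq (odd y) D') y./2.
  by case: (odd y) {y_lt y_half}; rewrite ?E0 ?E1.
by rewrite !nth_mkseq // y_half !in_val_ord.
Qed.

Lemma legal_class_move D v :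
  legal e D v = (cover (move_index v) (class_seq (move_class v) D) != class_seq (move_class v) D).
Proof.
rewrite legalE -class_seq_move; apply/idP/idP; apply: contra => /eqP E; apply/eqP.
  have E' := class_seq_move_other D v.
  by apply: class_seq_inj; case: (move_class v) E E' => /= E E'; rewrite ?E ?E'.
by rewrite E.
Qed.

Lemma seg_move_class D v :
  seg_move (move_class v) (class_end (move_class v)) (class_seq (move_class v) D) (move_index v).
Proof.
rewrite /seg_move size_class_seq /class_size /class_end /move_class /move_index.
have v_half := odd_double_half v; have n_half := odd_double_half n; have := ltn_ord v.
by case: (odd v) v_half => /= v_half; case: (odd n) n_half => /= n_half v_lt; lia.
Qed.

Lemma class_move_vertex D c k : seg_move c (class_end c) (class_seq c D) k ->
  exists v, move_class v = c /\ move_index v = k.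
Proof.
rewrite /seg_move size_class_seq /class_size /class_end => /and3P[k_le /implyP k0 /implyP k_end].
have n_half := odd_double_half n.
have v_lt : (if c then k.*2 else k.*2.-1) < n.
  case: c k_le k0 k_end => k_le k0 k_end.
    case: (k =P n./2) => [E|/eqP k_ne]; last by lia.
    by have := k_end (introT eqP E); case: (odd n) n_half => /= n_half; lia.
  have k_ne0 : k != 0 by apply/negP => /k0.
  case: (k =P uphalf n) => [E|/eqP k_ne]; last by lia.
  by have := k_end (introT eqP E); case: (odd n) n_half => /= n_half; lia.
exists (Ordinal v_lt); rewrite /move_class /move_index /=.
case: c k_le k0 k_end v_lt => k_le k0 k_end v_lt /=.
  by rewrite odd_double /= doubleK.
have k_ne0 : k != 0 by apply/negP => /k0.
have -> : odd k.*2.-1.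
  by case: k k_ne0 {k_le k0 k_end v_lt} => // k _; rewrite doubleS /= odd_double.
by split => //; lia.
Qed.

Lemma path_weight_move D v : path_weight (D :|: nbhd e v) =
  seg_weight (move_class v) 0 (class_end (move_class v))
    (cover (move_index v) (class_seq (move_class v) D)) + class_weight (~~ move_class v) D.
Proof.
by rewrite (path_weightE (move_class v)) /class_weight class_seq_move class_seq_move_other.
Qed.

Lemma path_weight_legal D v : legal e D v ->
  path_weight (D :|: nbhd e v) < path_weight D <= path_weight (D :|: nbhd e v) + 3.
Proof.
rewrite legal_class_move (path_weightE (move_class v) D) path_weight_move => moved.
have /and3P[k_le /implyP k0 /implyP k_end] := seg_move_class D v.
have k0' : move_index v == 0 -> move_class v && (0 == 0) by move=> /k0 ->.
by have := seg_weight_cover k0' k_le k_end moved; rewrite /class_weight; lia.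
Qed.

Section PathDrop.
Variable drop : nat -> nat -> bool.
Hypothesis drop_lt : forall a a', drop a a' -> a' < a.
Hypothesis dropDr : forall a a' b, odd (a + b) <= odd a -> drop a a' -> drop (a + b) (a' + b).
Hypothesis drop_run : forall c X p,
  0 < run_weight c X p -> exists2 w, run_option c X p w & drop (run_weight c X p) w.

Lemma path_drop D : 0 < path_weight D ->
  exists2 v, legal e D v & drop (path_weight D) (path_weight (D :|: nbhd e v)).
Proof.
move=> W_gt0.
have [c [w_gt0 par]] : exists c, 0 < class_weight c D /\
    odd (path_weight D) <= odd (class_weight c D).
  by case/odd_summand: W_gt0 => -[]; [exists false | exists true].
have [k mk dk] := seg_drop dropDr drop_run w_gt0.
have [v [vc vk]] := class_move_vertex mk.
exists v.
  by rewrite legal_class_move vc vk; apply: contraTneq (drop_lt dk) => ->; rewrite ltnn.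
by rewrite path_weight_move vc vk (path_weightE c); apply: dropDr; rewrite -?path_weightE.
Qed.

End PathDrop.

Lemma path_dominator_drop D : 0 < path_weight D ->
  exists2 v, legal e D v & dominator_drop (path_weight D) (path_weight (D :|: nbhd e v)).
Proof.
apply: path_drop; [by move=> a a'; rewrite /dominator_drop; lia |
                   exact: dominator_dropDr | exact: dominator_drop_run].
Qed.

Lemma path_staller_drop D : 0 < path_weight D ->
  exists2 v, legal e D v & staller_drop (path_weight D) (path_weight (D :|: nbhd e v)).
Proof.
by apply: path_drop => [a a' /andP[] //||]; [exact: staller_dropDr | exact: staller_drop_run].
Qed.

Lemma path_gamma_tg : gamma_tg e = (path_weight set0)./2.
Proof. exact: gamma_tg_potential path_weight_legal path_dominator_drop path_staller_drop. Qed.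

Lemma path_gamma_tg_decl v : gamma_tg_decl e v = (path_weight [set v])./2.
Proof.
exact: gamma_tg_decl_potential path_weight_legal path_dominator_drop path_staller_drop v.
Qed.

Lemma class_seq_set0 c : class_seq c set0 = nseq (class_size c) false.
Proof.
apply: (@eq_from_nth _ true); rewrite size_class_seq ?size_nseq // => i i_lt.
by rewrite nth_mkseq // nth_nseq i_lt; apply/existsP => -[y]; rewrite inE.
Qed.

Lemma in_val_set1 (v : 'I_n) x : in_val [set v] x = (x == v).
Proof.
apply/existsP/eqP => [[y /andP[]]|->]; first by rewrite inE => /eqP -> /eqP.
by exists v; rewrite inE !eqxx.
Qed.

Lemma class_seq_set1 (v : 'I_n) c : class_seq c [set v] =
  if c == odd v then nseq v./2 false ++ true :: nseq (class_size c - (v./2).+1) false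
  else nseq (class_size c) false.
Proof.
have v_half := odd_double_half v; have v_lt := ltn_ord v.
rewrite /class_seq; under eq_mkseq => i do rewrite in_val_set1.
case: eqP => [->|c_ne].
  rewrite -mkseq_eq1; last by rewrite /class_size; case: (odd v) v_half => /= v_half; lia.
  by apply: eq_mkseq => i; apply/eqP/eqP; lia.
apply: (@eq_from_nth _ true); rewrite size_mkseq ?size_nseq // => i i_lt.
rewrite nth_mkseq // nth_nseq i_lt; apply/eqP.
by case: c c_ne {i_lt}; case: (odd v) v_half => /= v_half c_ne; lia.
Qed.

Lemma class_weight_set0 c : class_weight c set0 = run_weight c (class_end c) (class_size c).
Proof. by rewrite /class_weight class_seq_set0 seg_weight_nseq0. Qed.

Lemma path_weight_set1 (v : 'I_n) : path_weight [set v] =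
  run_weight (odd v) true v./2
  + run_weight true (class_end (odd v)) (class_size (odd v) - (v./2).+1)
  + class_weight (~~ odd v) set0.
Proof.
rewrite (path_weightE (odd v)) /class_weight !class_seq_set1 eqxx.
have -> : (~~ odd v == odd v) = false by case: (odd v).
by rewrite -class_seq_set0 seg_weight_run // seg_weight_true seg_weight_nseq0.
Qed.

End PathClasses.

Lemma half_path_weight_set1_lt n : (n %% 6 == 2) || (n %% 6 == 4) ->
  forall v : 'I_n, (path_weight [set v])./2 < (path_weight (set0 : {set 'I_n}))./2.
Proof.
move=> n_mod v; rewrite path_weight_set1 (path_weightE (odd v)) !class_weight_set0.
rewrite /class_end /class_size.
have v_half := odd_double_half v; have n_half := odd_double_half n; have := ltn_ord v.
by case: (odd v) v_half => /= v_half; case: (odd n) n_half => /= n_half v_lt; run_arith.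
Qed.

Lemma exists_half_path_weight_set1_ge n : 2 <= n -> ~~ ((n %% 6 == 2) || (n %% 6 == 4)) ->
  exists v : 'I_n, (path_weight (set0 : {set 'I_n}))./2 <= (path_weight [set v])./2.
Proof.
move=> n_ge2 n_mod; have n_half := odd_double_half n.
rewrite (path_weightE true) !class_weight_set0 /class_end /class_size.
case: (boolP (odd n)) n_half => odd_n n_half.
  case: (boolP (n %% 6 == 1)) => n1.
    have v_lt : 3 < n by lia.
    exists (Ordinal v_lt); rewrite path_weight_set1 class_weight_set0 /class_end /class_size /=.
    by rewrite odd_n; move: n_mod n1; run_arith.
  have v_lt : 0 < n by lia.
  exists (Ordinal v_lt); rewrite path_weight_set1 class_weight_set0 /class_end /class_size /=.
  by rewrite odd_n; move: n_mod n1; run_arith.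
have v_lt : 2 < n by lia.
exists (Ordinal v_lt); rewrite path_weight_set1 class_weight_set0 /class_end /class_size /=.
by rewrite (negbTE odd_n); move: n_mod; run_arith.
Qed.

Theorem theorem3p1 (n : nat) : 2 <= n ->
  (gamma_tg_critical (path_rel n) <-> (n %% 6 == 2) || (n %% 6 == 4)).
Proof.
move=> n_ge2; rewrite /gamma_tg_critical path_gamma_tg.
split => [critical | n_mod v]; last by rewrite path_gamma_tg_decl; apply: half_path_weight_set1_lt.
apply: contraT => n_mod; have [v W_le] := exists_half_path_weight_set1_ge n_ge2 n_mod.
by have := critical v; rewrite path_gamma_tg_decl ltnNge W_le.
Qed.
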